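(* Let $(E,\langle\cdot,\cdot\rangle,\rho)$ be a Courant vector bundle over $M$. For any two pre-Courant algebroid structures $\circ$ and $\tilde\circ$ on it, the associated Lie 2-algebras are isomorphic.
   Context: A Courant vector bundle over a smooth manifold $M$ is a vector bundle $E\to M$ with a fibrewise nondegenerate symmetric bilinear form $\langle\cdot,\cdot\rangle$ and a bundle map $\rho:E\to TM$ such that $\rho\circ\rho^*=0$, where $\rho^*:T^*M\to E^*\cong E$ is the dual of $\rho$ followed by the identification $E^*\cong E$ via $\langle\cdot,\cdot\rangle$. A pre-Courant algebroid structure on it is an $\mathbb R$-bilinear operation $\circ$ on $\Gamma(E)$ such that for all $e_1,e_2,e_3\in\Gamma(E)$: (i) $\rho(e_1\circ e_2)=[\rho(e_1),\rho(e_2)]$; (ii) $\langle e_1\circ e_1,e_2\rangle=\frac12\rho(e_2)\langle e_1,e_1\rangle$; (iii) $\rho(e_1)\langle e_2,e_3\rangle=\langle e_1\circ e_2,e_3\rangle+\langle e_2,e_1\circ e_3\rangle$. The Lie 2-algebra associated to $(E,\langle\cdot,\cdot\rangle,\rho,\circ)$ is the complex $\Gamma(\operatorname{Ker}\rho)\xrightarrow{i}\Gamma(E)$ ($i$ inclusion) with $l_2(e_1,e_2)=[\![e_1,e_2]\!]:=\frac12(e_1\circ e_2-e_2\circ e_1)$, $l_2(e,\kappa)=[\![e,\kappa]\!]=-l_2(\kappa,e)$ ($e\in\Gamma(E)$, $\kappa\in\Gamma(\operatorname{Ker}\rho)$), and $l_3(e_1,e_2,e_3)=[\![e_1,[\![e_2,e_3]\!]]\!]+[\![e_2,[\![e_3,e_1]\!]]\!]+[\![e_3,[\![e_1,e_2]\!]]\!]$.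 For two such structures $(V_1\xrightarrow{d}V_0,l_2,l_3)$ and $(V_1'\xrightarrow{d'}V_0',l_2',l_3')$, an isomorphism consists of bijective linear maps $f_0:V_0\to V_0'$, $f_1:V_1\to V_1'$ with $f_0\circ d=d'\circ f_1$ and a bilinear map $f_2:V_0\times V_0\to V_1'$ such that for all $x,y,z\in V_0$, $m\in V_1$: $l_2'(f_0x,f_0y)-f_0l_2(x,y)=d'f_2(x,y)$; $l_2'(f_0x,f_1m)-f_1l_2(x,m)=f_2(x,dm)$; $l_2'(f_1m,f_0x)-f_1l_2(m,x)=f_2(dm,x)$; and $f_1(l_3(x,y,z))+l_2'(f_0x,f_2(y,z))-l_2'(f_0y,f_2(x,z))-l_2'(f_2(x,y),f_0z)-f_2(l_2(x,y),z)+f_2(x,l_2(y,z))-f_2(y,l_2(x,z))-l_3'(f_0x,f_0y,f_0z)=0$. *)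

From HB Require Import structures.
From mathcomp Require Import all_boot all_order all_algebra.
Set Implicit Arguments. Unset Strict Implicit. Unset Printing Implicit Defensive.
Import Order.TTheory GRing.Theory Num.Theory.
Local Open Scope ring_scope.

(* Data of a Courant vector bundle, in terms of
   A   = C^oo(M) (a commutative R-algebra),
   V   = Gamma(E) (an R-vector space),
   act = the C^oo(M)-module structure on Gamma(E),
   g   = the C^oo(M)-valued pairing <.,.> on sections,
   rho = the anchor, rho e being the vector field rho(e) acting on functions. *)
Definition courant_vector_bundle (R : comRingType) (A : comAlgType R)
  (V : lmodType R) (act : A -> V -> V) (g : V -> V -> A) (rho : V -> A -> A)
  : Prop :=
  [/\
      [/\ forall v, act 1 v = v,
          forall a b v, act (a * b) v = act a (act b v),
          forall a b v, act (a + b) v = act a v + act b v,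
          forall a u v, act a (u + v) = act a u + act a v &
          forall (r : R) v, act r%:A v = r *: v],
      [/\ forall u v, g u v = g v u,
          forall u v w, g (u + v) w = g u w + g v w,
          forall a u w, g (act a u) w = a * g u w &
          forall u, (forall w, g u w = 0) -> u = 0],
      (forall e (r : R) f h, rho e (r *: f + h) = r *: rho e f + rho e h)
      /\ (forall e f h, rho e (f * h) = f * rho e h + h * rho e f),
      (forall u v f, rho (u + v) f = rho u f + rho v f)
      /\ (forall a u f, rho (act a u) f = a * rho u f) &
      (* rho o rho^* = 0 : D f = rho^*(df) is characterised by
         <D f, e> = rho(e) f, and rho (D f) = 0 *)
      exists D : A -> V,
        (forall f e, g (D f) e = rho e f) /\ (forall f h, rho (D f) h = 0)].

Definition vf_bracket (R : comRingType) (A : comAlgType R) (X Y : A -> A) :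
  A -> A := fun f => X (Y f) - Y (X f).

Definition pre_courant (R : fieldType) (A : comAlgType R)
  (V : lmodType R) (g : V -> V -> A) (rho : V -> A -> A) (op : V -> V -> V)
  : Prop :=
  [/\
      forall (r : R) u v w, op (r *: u + v) w = r *: op u w + op v w,
      forall (r : R) u v w, op w (r *: u + v) = r *: op w u + op w v,
      forall e1 e2 f, rho (op e1 e2) f = vf_bracket (rho e1) (rho e2) f,
      forall e1 e2, g (op e1 e1) e2 = (2%:R^-1 : R) *: rho e2 (g e1 e1) &
      forall e1 e2 e3,
        rho e1 (g e2 e3) = g (op e1 e2) e3 + g e2 (op e1 e3)].

Definition ker_anchor (R : comRingType) (A : comAlgType R) (V : lmodType R)
  (rho : V -> A -> A) (e : V) : Prop := forall f, rho e f = 0.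

Definition skew_br (R : fieldType) (V : lmodType R) (op : V -> V -> V)
  (e1 e2 : V) : V := (2%:R^-1 : R) *: (op e1 e2 - op e2 e1).

Definition jacobiator (R : fieldType) (V : lmodType R) (op : V -> V -> V)
  (e1 e2 e3 : V) : V :=
  skew_br op e1 (skew_br op e2 e3) + skew_br op e2 (skew_br op e3 e1)
  + skew_br op e3 (skew_br op e1 e2).

(* Isomorphism of Lie 2-algebras (V1 --d--> V0, l2, l3) and (V1' --d'--> V0',
   l2', l3').  V1 (resp. V1') is given as a linear subspace K1 (resp. K1') of an
   ambient R-module W1 (resp. W1'); l2 is given by its three components
   V0 x V0 -> V0, V0 x V1 -> V1, V1 x V0 -> V1. *)
Definition lie2_iso (R : ringType) (V0 W1 V0' W1' : lmodType R)
  (K1 : W1 -> Prop) (K1' : W1' -> Prop)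
  (d : W1 -> V0) (l2 : V0 -> V0 -> V0) (l2a : V0 -> W1 -> W1)
  (l2b : W1 -> V0 -> W1) (l3 : V0 -> V0 -> V0 -> W1)
  (d' : W1' -> V0') (l2' : V0' -> V0' -> V0') (l2a' : V0' -> W1' -> W1')
  (l2b' : W1' -> V0' -> W1') (l3' : V0' -> V0' -> V0' -> W1')
  (f0 : V0 -> V0') (f1 : W1 -> W1') (f2 : V0 -> V0 -> W1') : Prop :=
  [/\
      (forall (r : R) x y, f0 (r *: x + y) = r *: f0 x + f0 y) /\ bijective f0,
      [/\ forall m, K1 m -> K1' (f1 m),
          forall (r : R) m n, K1 m -> K1 n -> f1 (r *: m + n) = r *: f1 m + f1 n,
          forall m n, K1 m -> K1 n -> f1 m = f1 n -> m = n &
          forall m', K1' m' -> exists2 m, K1 m & f1 m = m'],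
      (forall m, K1 m -> f0 (d m) = d' (f1 m)),
      [/\ forall x y, K1' (f2 x y),
          forall (r : R) x y z, f2 (r *: x + y) z = r *: f2 x z + f2 y z &
          forall (r : R) x y z, f2 z (r *: x + y) = r *: f2 z x + f2 z y] &
      [/\ forall x y, l2' (f0 x) (f0 y) - f0 (l2 x y) = d' (f2 x y),
          forall x m, K1 m -> l2a' (f0 x) (f1 m) - f1 (l2a x m) = f2 x (d m),
          forall x m, K1 m -> l2b' (f1 m) (f0 x) - f1 (l2b m x) = f2 (d m) x &
          forall x y z,
            f1 (l3 x y z) + l2a' (f0 x) (f2 y z) - l2a' (f0 y) (f2 x z)
            - l2b' (f2 x y) (f0 z) - f2 (l2 x y) z + f2 x (l2 y z)
            - f2 y (l2 x z) - l3' (f0 x) (f0 y) (f0 z) = 0]].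

(* In both, V0 = Gamma(E),
   V1 = Gamma(Ker rho) (inside Gamma(E)), d = inclusion,
   l2(e1,e2) = [[e1,e2]], l2(e,k) = [[e,k]], l2(k,e) = -[[e,k]] = [[k,e]],
   l3 = Jacobiator. *)
Definition assoc_lie2_iso (R : fieldType) (A : comAlgType R) (V : lmodType R)
  (rho : V -> A -> A) (op op' : V -> V -> V) : Prop :=
  exists (f0 : V -> V) (f1 : V -> V) (f2 : V -> V -> V),
    lie2_iso (ker_anchor rho) (ker_anchor rho)
      id (skew_br op) (skew_br op) (fun k e => - skew_br op e k) (jacobiator op)
      id (skew_br op') (skew_br op') (fun k e => - skew_br op' e k)
      (jacobiator op')
      f0 f1 f2.

(* Take f0 = f1 = id and f2 = P - Q, where Q and P are the skew brackets of
   the two structures.  By axiom (i) both have the same anchor, so f2 takes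
   values in Ker rho.  The first three structure equations then hold trivially
   or by skew-symmetry, and the fourth is the cyclic sum of the telescoping
   identity  P x (P y z) - Q x (Q y z) = P x ((P - Q) y z) + (P - Q) x (Q y z). *)
From HB Require Import structures.
From mathcomp Require Import all_boot all_order all_algebra.
From mathcomp Require Import all_classical all_reals.
Import Order.TTheory GRing.Theory Num.Theory.
Local Open Scope ring_scope.

Section SkewBracket.
Context {R : fieldType} {V : lmodType R} (op : V -> V -> V).
Hypothesis op_linearl :
  forall (r : R) u v w, op (r *: u + v) w = r *: op u w + op v w.
Hypothesis op_linearr :
  forall (r : R) u v w, op w (r *: u + v) = r *: op w u + op w v.

Lemma skew_br_antisym u v : skew_br op u v = - skew_br op v u.
Proof. by rewrite /skew_br -scalerN opprB. Qed.

Lemma skew_br_linearl (r : R) u v w :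
  skew_br op (r *: u + v) w = r *: skew_br op u w + skew_br op v w.
Proof.
rewrite /skew_br op_linearl op_linearr opprD addrACA -scalerBr scalerDr.
by rewrite !scalerA mulrC.
Qed.

Lemma skew_br_linearr (r : R) u v w :
  skew_br op w (r *: u + v) = r *: skew_br op w u + skew_br op w v.
Proof. by rewrite !(skew_br_antisym w) skew_br_linearl scalerN opprD. Qed.

Lemma skew_brBr u v w : skew_br op u (v - w) = skew_br op u v - skew_br op u w.
Proof. by rewrite addrC -scaleN1r skew_br_linearr scaleN1r addrC. Qed.

Lemma skew_brNr u v : skew_br op u (- v) = - skew_br op u v.
Proof. by rewrite -[- v]sub0r skew_brBr -[0 in LHS](subrr v) skew_brBr subrr sub0r. Qed.

End SkewBracket.

Section TwoBrackets.
Context {R : fieldType} {V : lmodType R} (op op' : V -> V -> V).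
Hypothesis op_linearl :
  forall (r : R) u v w, op (r *: u + v) w = r *: op u w + op v w.
Hypothesis op_linearr :
  forall (r : R) u v w, op w (r *: u + v) = r *: op w u + op w v.
Hypothesis op'_linearl :
  forall (r : R) u v w, op' (r *: u + v) w = r *: op' u w + op' v w.
Hypothesis op'_linearr :
  forall (r : R) u v w, op' w (r *: u + v) = r *: op' w u + op' w v.

Local Notation Q := (skew_br op).
Local Notation P := (skew_br op').
Local Notation D x y := (P x y - Q x y).

Lemma jacobiator_diff x y z :
  jacobiator op' x y z - jacobiator op x y z =
  P x (D y z) + P y (D z x) + P z (D x y)
  + (D x (Q y z) + D y (Q z x) + D z (Q x y)).
Proof.
have telescope a b c : P a (D b c) + D a (Q b c) = P a (P b c) - Q a (Q b c).
  by rewrite skew_brBr // subrKA.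
rewrite [RHS]addrACA [X in _ = X + _]addrACA !telescope /jacobiator.
by rewrite !opprD addrACA [X in X + _ = _]addrACA.
Qed.

Lemma lie2_coherence_diff x y z :
  jacobiator op x y z + P x (D y z) - P y (D x z) - - P z (D x y)
  - D (Q x y) z + D x (Q y z) - D y (Q x z) - jacobiator op' x y z = 0.
Proof.
have DC a b : D a b = - D b a.
  by rewrite (skew_br_antisym op' a) (skew_br_antisym op a) opprK opprB addrC.
have DNr a b : D a (- b) = - D a b by rewrite !skew_brNr // opprK opprB addrC.
rewrite (DC x z) (DC (Q x y)) [Q x z]skew_br_antisym (DNr y) !opprK.
have -> : jacobiator op' x y z =
          jacobiator op' x y z - jacobiator op x y z + jacobiator op x y z.
  by rewrite subrK.
rewrite jacobiator_diff skew_brNr // opprK; apply/eqP; rewrite subr_eq0; apply/eqP.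
rewrite (addrAC _ (D z (Q x y)) (D x (Q y z))) (addrAC _ (D z (Q x y))).
by rewrite [RHS]addrC !addrA.
Qed.

Lemma skew_br_lie2_iso (K : V -> Prop) :
  (forall x y, K (D x y)) ->
  lie2_iso K K
    id Q Q (fun k e => - Q e k) (jacobiator op)
    id P P (fun k e => - P e k) (jacobiator op')
    id id (fun x y => D x y).
Proof.
move=> KD; split=> //.
- by split=> //; exists id.
- by split=> // m' Km'; exists m'.
- split=> // r x y z.
  + by rewrite !skew_br_linearl // scalerBr opprD addrACA.
  + by rewrite !skew_br_linearr // scalerBr opprD addrACA.
- split=> // [x m _ | x y z]; last exact: lie2_coherence_diff.
  by rewrite /= (skew_br_antisym op' m) (skew_br_antisym op m) opprK addrC.
Qed.

End TwoBrackets.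

Section Anchor.
Context {R : fieldType} {A : comAlgType R} {V : lmodType R} (rho : V -> A -> A).
Hypothesis anchorD : forall u v f, rho (u + v) f = rho u f + rho v f.
Hypothesis anchorZ : forall (r : R) u f, rho (r *: u) f = r%:A * rho u f.

Lemma anchorB u v f : rho (u - v) f = rho u f - rho v f.
Proof. by rewrite -[- v]scaleN1r anchorD anchorZ scaleN1r mulN1r. Qed.

Lemma anchor_skew_br (op : V -> V -> V) x y f :
  (forall e1 e2 f, rho (op e1 e2) f = vf_bracket (rho e1) (rho e2) f) ->
  rho (skew_br op x y) f =
  (2%:R^-1 : R)%:A * (vf_bracket (rho x) (rho y) f - vf_bracket (rho y) (rho x) f).
Proof. by move=> anchor_op; rewrite anchorZ anchorB !anchor_op. Qed.

Lemma ker_anchor_skew_br_diff (op op' : V -> V -> V) x y :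
  (forall e1 e2 f, rho (op e1 e2) f = vf_bracket (rho e1) (rho e2) f) ->
  (forall e1 e2 f, rho (op' e1 e2) f = vf_bracket (rho e1) (rho e2) f) ->
  ker_anchor rho (skew_br op' x y - skew_br op x y).
Proof. by move=> anchor_op anchor_op' f; rewrite anchorB !anchor_skew_br // subrr. Qed.

End Anchor.

Lemma courant_anchor_linear {R : comNzRingType} {A : comAlgType R}
    {V : lmodType R} {act : A -> V -> V} {g : V -> V -> A} {rho : V -> A -> A} :
  courant_vector_bundle act g rho ->
  (forall u v f, rho (u + v) f = rho u f + rho v f)
  /\ (forall (r : R) u f, rho (r *: u) f = r%:A * rho u f).
Proof.
case=> [[_ _ _ _ actZ] _ _ [anchorD anchorA] _]; split=> // r u f.
by rewrite -actZ anchorA.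
Qed.

Theorem corollary4p9 (R : realType) (A : comAlgType R) (V : lmodType R)
  (act : A -> V -> V) (g : V -> V -> A) (rho : V -> A -> A)
  (HE : courant_vector_bundle act g rho)
  (op op' : V -> V -> V)
  (Hop : pre_courant g rho op) (Hop' : pre_courant g rho op') :
  assoc_lie2_iso rho op op'.
Proof.
have [anchorD anchorZ] := courant_anchor_linear HE.
case: Hop => op_linearl op_linearr anchor_op _ _.
case: Hop' => op'_linearl op'_linearr anchor_op' _ _.
exists id, id, (fun x y => skew_br op' x y - skew_br op x y).
apply: skew_br_lie2_iso => // x y.
exact: ker_anchor_skew_br_diff.
Qed.
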